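(* Let $(X_i, X_j)$ be jointly Gaussian with standard normal marginals and correlation $\rho_{ij}$. Let $k, g \ge 2$ be integers and let $S_{i0} < S_{i1} < \dots < S_{i(k-2)}$ and $S_{j0} < S_{j1} < \dots < S_{j(g-2)}$ be real cutoffs; set $S_{i(-1)} = S_{j(-1)} = -\infty$ and $S_{i(k-1)} = S_{j(g-1)} = +\infty$. Define discrete variables $V_i \in \{0,\dots,k-1\}$ and $V_j \in \{0,\dots,g-1\}$ by $V_i = c$ iff $S_{i(c-1)} < X_i \le S_{ic}$ and $V_j = d$ iff $S_{j(d-1)} < X_j \le S_{jd}$. Then $$\mathrm{Cov}(V_i, V_j) = \sum_{c_i=0}^{k-2}\sum_{c_j=0}^{g-2}\Big[\Psi(S_{ic_i}, S_{jc_j}, \rho_{ij}) - \Psi(S_{ic_i}, S_{jc_j}, 0)\Big],$$ where $\Psi(u,v,\rho)$ denotes the cumulative distribution function, evaluated at $(u,v)$, of the standard bivariate normal distribution with correlation $\rho$.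
   Context: $V_i$ and $V_j$ are obtained by ''linear discretization'' of the standard Gaussian variables $X_i$ and $X_j$, i.e., by partitioning the real line with increasing cutoffs and labeling the intervals $0,1,2,\dots$ from left to right. *)

From HB Require Import structures.
From mathcomp Require Import all_boot all_order all_algebra.
From mathcomp Require Import all_classical all_reals all_analysis.
Set Implicit Arguments. Unset Strict Implicit. Unset Printing Implicit Defensive.
Import Order.TTheory GRing.Theory Num.Theory.
Local Open Scope classical_set_scope.
Local Open Scope ring_scope.

Definition std_normal_pdf {R : realType} (x : R) : R := normal_pdf 0 1 x.

(* Law of the standard bivariate normal distribution with correlation rho
   (-1 <= rho <= 1): the law of (Z1, rho Z1 + sqrt(1-rho^2) Z2) for
   independent standard normals Z1, Z2.  Valid also for rho = +-1. *)
Definition std_bvn_law {R : realType} (rho : R) (A : set (R * R)%type) : \bar R :=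
  (\int[@lebesgue_measure R]_x \int[@lebesgue_measure R]_y
     ((std_normal_pdf x * std_normal_pdf y)%:E *
      (\1_A (x, rho * x + Num.sqrt (1 - rho ^+ 2) * y))%:E))%E.

Definition Psi {R : realType} (u v rho : R) : R :=
  fine (std_bvn_law rho (`]-oo, u] `*` `]-oo, v])).

Definition std_bvn_pair {d} {T : measurableType d} {R : realType}
  (P : probability T R) (X Y : T -> R) (rho : R) : Prop :=
  [/\ measurable_fun setT X, measurable_fun setT Y, -1 <= rho <= 1 &
      forall A : set (R * R)%type, measurable A ->
        P ((fun t => (X t, Y t)) @^-1` A) = std_bvn_law rho A].

Definition cut_lo {R : realType} (S : nat -> R) (c : nat) : \bar R :=
  if c == 0%N then -oo%E else (S c.-1)%:E.
Definition cut_hi {R : realType} (n : nat) (S : nat -> R) (c : nat) : \bar R :=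
  if c == n.-1 then +oo%E else (S c)%:E.

Definition lin_discretization {T : Type} {R : realType} (n : nat) (S : nat -> R)
  (X V : T -> R) : Prop :=
  forall t (c : nat), (c < n)%N ->
    (V t = c%:R <-> (cut_lo S c < (X t)%:E)%E /\ ((X t)%:E <= cut_hi n S c)%E).

Definition strictly_increasing_cutoffs {R : realType} (n : nat) (S : nat -> R) : Prop :=
  forall a b : nat, (a < b)%N -> (b <= n - 2)%N -> S a < S b.

From HB Require Import structures.
From mathcomp Require Import all_boot all_order all_algebra.
From mathcomp Require Import all_classical all_reals all_analysis.
From mathcomp Require Import ring lra zify measurable_realfun.
Set Implicit Arguments. Unset Strict Implicit. Unset Printing Implicit Defensive.
Import Order.TTheory GRing.Theory Num.Theory numFieldNormedType.Exports.
Local Open Scope ring_scope.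
Local Open Scope classical_set_scope.

(* A linear discretization counts the cutoffs below the variable:
   V = sum_c 1{X > S_c}.  Covariance is bilinear, so Cov(V_i, V_j) is the double
   sum of the event covariances P(A & B) - P(A) P(B) for A = {X_i > S_ic},
   B = {X_j > S_jc'}.  An event covariance does not change when both events are
   complemented, which turns each term into
   P(X_i <= a, X_j <= b) - P(X_i <= a) P(X_j <= b) = Psi(a, b, rho) - Phi(a) Phi(b).
   Finally Phi(a) Phi(b) = Psi(a, b, 0) because both marginals of the standard
   bivariate normal law are standard normal; for the second marginal this uses
   Fubini and the symmetry of the bivariate density when |rho| < 1, and a direct
   computation when rho = 1 or rho = -1. *)

Lemma integral_mul_indic d (T : measurableType d) (R : realType)
    (mu : {measure set T -> \bar R}) (D : set T) (f : T -> \bar R) :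
  (\int[mu]_x (f x * (\1_D x)%:E) = \int[mu]_(x in D) f x)%E.
Proof.
rewrite [RHS]integral_mkcond; apply: eq_integral => x _.
by rewrite /patch indicE; case: (x \in D); rewrite ?mule1 ?mule0.
Qed.

Lemma measurable_preimageT d d' (aT : measurableType d) (rT : measurableType d')
    (f : aT -> rT) (B : set rT) :
  measurable_fun setT f -> measurable B -> measurable (f @^-1` B).
Proof. by move=> mf mB; rewrite -[_ @^-1` _]setTI; exact: mf. Qed.

Section std_normal.
Context {R : realType}.
Local Notation mu := (@lebesgue_measure R).
Local Notation phi := (@std_normal_pdf R).

Lemma std_normal_pdf_ge0 x : 0 <= phi x.
Proof. exact: normal_pdf_ge0. Qed.

Lemma measurable_std_normal_pdf : measurable_fun setT phi.
Proof. exact: measurable_normal_pdf. Qed.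

Lemma continuous_std_normal_pdf : continuous phi.
Proof. exact: continuous_normal_pdf (oner_neq0 R). Qed.

Lemma integral_std_normal_pdf : (\int[mu]_x (phi x)%:E = 1)%E.
Proof. exact: integral_normal_pdf. Qed.

Lemma std_normal_pdfN x : phi (- x) = phi x.
Proof. by rewrite /std_normal_pdf normal_pdfE ?oner_neq0//= /normal_fun !subr0 sqrrN. Qed.

Lemma measurable_std_normal_pdf_indic (B : set R) (f : R -> R) :
  measurable B -> measurable_fun setT f ->
  measurable_fun setT (fun y => ((phi y)%:E * (\1_B (f y))%:E)%E).
Proof.
move=> mB mf; rewrite (_ : (fun y => _) = EFin \o (fun y => phi y * \1_B (f y))).
  apply/measurable_EFinP/measurable_funM; first exact: measurable_std_normal_pdf.
  exact: measurableT_comp (measurable_indic mB) mf.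
by apply/funext => y; rewrite /= EFinM.
Qed.

(* The symmetry of the bivariate normal density in its two arguments. *)
Lemma std_normal_pdf_mul_swap r s x t : s ^+ 2 = 1 - r ^+ 2 -> s != 0 ->
  phi x * phi ((t - r * x) / s) = phi t * phi ((x - r * t) / s).
Proof.
move=> s2 s0; rewrite /std_normal_pdf normal_pdfE ?oner_neq0//= /normal_fun.
rewrite mulrACA [in RHS]mulrACA -!expRD; congr (_ * expR _).
rewrite !subr0 !expr_div_n.
have -> : (t - r * x) ^+ 2 = (x - r * t) ^+ 2 + (t ^+ 2 - x ^+ 2) * s ^+ 2.
  by rewrite s2; ring.
by field.
Qed.

Section affine_change.
Variables (m s : R).
Hypothesis s_gt0 : 0 < s.
Let F (t : R^o) : R^o := (t - m) / s.

Let F'E : F^`()%classic = cst s^-1.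
Proof.
apply/funext => x; rewrite /F derive1E deriveM// deriveD// derive_cst scaler0.
by rewrite add0r derive_id derive_cst addr0 scaler1.
Qed.

Let derivable_F x : derivable F x 1.
Proof. by rewrite /F; apply: derivableM => //; apply: derivableD. Qed.

Lemma integral_std_normal_pdf_affine :
  (\int[mu]_x (phi ((x - m) / s) / s)%:E = 1)%E.
Proof.
rewrite -integral_std_normal_pdf (@increasing_ge0_integration_by_substitutionT _ F).
- by apply: eq_integral => x _; rewrite F'E.
- by move=> x y xy; rewrite /F ltr_pM2r ?invr_gt0// ltrBlDr subrK.
- by rewrite F'E => ?; exact: cvg_cst.
- by rewrite F'E; exact: is_cvg_cst.
- by rewrite F'E; exact: is_cvg_cst.
- exact: derivable_F.
- by apply/gt0_cvgMlNy; [rewrite invr_gt0|exact: cvg_addrr_Ny].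
- by apply/gt0_cvgMly; [rewrite invr_gt0|exact: cvg_addrr].
- exact: continuous_std_normal_pdf.
- exact: std_normal_pdf_ge0.
Qed.

Lemma integral_std_normal_pdf_affine_Iic b :
  (\int[mu]_(y in `]-oo, ((b - m) / s)%R]) (phi y)%:E =
   \int[mu]_(t in `]-oo, b]) (phi ((t - m) / s) / s)%:E)%E.
Proof.
rewrite (_ : (b - m) / s = F b)// (@increasing_ge0_integration_by_substitutionNy _ F).
- by apply: eq_integral => x _; rewrite F'E.
- by move=> x y _ _ xy; rewrite /F ltr_pM2r ?invr_gt0// ltrBlDr subrK.
- by rewrite F'E => ? _; exact: cvg_cst.
- by rewrite F'E; exact: is_cvg_cst.
- by rewrite F'E; exact: cvg_cst.
- split; first by move=> x _; exact: derivable_F.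
  exact/cvg_at_left_filter/differentiable_continuous/derivable1_diffP/derivable_F.
- by apply/gt0_cvgMlNy; [rewrite invr_gt0|exact: cvg_addrr_Ny].
- exact/continuous_subspaceT/continuous_std_normal_pdf.
- by move=> x _; exact: std_normal_pdf_ge0.
Qed.

End affine_change.

Lemma measurable_std_normal_pdf_affine (m s : R) :
  measurable_fun setT (fun t : R => phi ((t - m) / s) / s).
Proof.
apply: measurable_funM => //; apply: measurableT_comp; first exact: measurable_std_normal_pdf.
by apply: measurable_funM => //; exact: measurable_funB.
Qed.

Lemma integral_std_normal_pdf_indic_affine_Iic m s b : 0 < s ->
  (\int[mu]_y ((phi y)%:E * (\1_`]-oo, b] (m + s * y))%:E) =
   \int[mu]_(t in `]-oo, b]) (phi ((t - m) / s) / s)%:E)%E.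
Proof.
move=> s_gt0; rewrite -integral_std_normal_pdf_affine_Iic// -[RHS]integral_mul_indic.
apply: eq_integral => y _; rewrite !indicE !mem_setE !in_itv/= ler_pdivlMr//.
by rewrite lerBrDl (mulrC y s).
Qed.

Lemma integral_std_normal_pdf_indicN_Iic b :
  (\int[mu]_x ((phi x)%:E * (\1_`]-oo, b] (- x))%:E) =
   \int[mu]_(x in `]-oo, b]) (phi x)%:E)%E.
Proof.
rewrite -[b in RHS]opprK ge0_integration_by_substitutionNy; first last.
- by move=> x _; exact: std_normal_pdf_ge0.
- exact/continuous_subspaceT/continuous_std_normal_pdf.
rewrite -[RHS]integral_mul_indic; apply: eq_integral => x _ /=.
by rewrite std_normal_pdfN !indicE !mem_setE !in_itv/= andbT lerNl.
Qed.

(* Fubini, then [std_normal_pdf_mul_swap] turns the inner density in x into a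
   normal density of mean [r t] and variance [s ^+ 2]. *)
Lemma integral_std_normal_pdf_mixture r s (I : set R) :
  measurable I -> 0 < s -> s ^+ 2 = 1 - r ^+ 2 ->
  (\int[mu]_x ((phi x)%:E * \int[mu]_(t in I) (phi ((t - r * x) / s) / s)%:E) =
   \int[mu]_(t in I) (phi t)%:E)%E.
Proof.
move=> mI s_gt0 s2.
pose f (z : R * R) := (phi z.1 * (phi ((z.2 - r * z.1) / s) / s) * \1_I z.2)%:E.
have mf : measurable_fun setT f.
  apply/measurable_EFinP/measurable_funM; last first.
    exact: measurableT_comp (measurable_indic mI) measurable_snd.
  apply: measurable_funM.
    exact: measurableT_comp measurable_std_normal_pdf measurable_fst.
  apply: measurable_funM => //; apply: measurableT_comp; first exact: measurable_std_normal_pdf.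
  apply: measurable_funM => //; apply: measurable_funB; first exact: measurable_snd.
  by apply: measurable_funM => //; exact: measurable_fst.
have f_ge0 z : (0 <= f z)%E.
  by rewrite lee_fin !mulr_ge0 ?indic_ge0 ?std_normal_pdf_ge0// invr_ge0 ltW.
have inner x : ((phi x)%:E * \int[mu]_(t in I) (phi ((t - r * x) / s) / s)%:E =
    \int[mu]_t f (x, t))%E.
  rewrite -integral_mul_indic -ge0_integralZl//=.
  - by apply: eq_integral => t _; rewrite /f/= -!EFinM mulrA.
  - rewrite (_ : (fun t => _) = EFin \o (fun t => phi ((t - r * x) / s) / s * \1_I t)).
      apply/measurable_EFinP/measurable_funM; last exact: measurable_indic.
      exact: measurable_std_normal_pdf_affine.
    by apply/funext => t /=; rewrite EFinM.
  - by move=> t _; rewrite -EFinM lee_fin mulr_ge0 ?indic_ge0// divr_ge0 ?std_normal_pdf_ge0// ltW.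
  - by rewrite lee_fin std_normal_pdf_ge0.
under eq_integral => x _ do rewrite inner.
rewrite (@fubini_tonelli _ _ _ _ _ mu mu f mf f_ge0) /= -[RHS]integral_mul_indic.
apply: eq_integral => t _.
have swap x : f (x, t) = ((phi t * \1_I t)%:E * (phi ((x - r * t) / s) / s)%:E)%E.
  rewrite /f/= -EFinM mulrA (std_normal_pdf_mul_swap x t s2) ?gt_eqF//; congr EFin; ring.
under eq_integral => x _ do rewrite swap.
rewrite ge0_integralZl//= ?integral_std_normal_pdf_affine ?mule1 ?EFinM//.
- by apply/measurable_EFinP; exact: measurable_std_normal_pdf_affine.
- by move=> x _; rewrite lee_fin divr_ge0 ?std_normal_pdf_ge0// ltW.
- by rewrite lee_fin mulr_ge0 ?indic_ge0 ?std_normal_pdf_ge0.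
Qed.

End std_normal.

Section std_bvn_law.
Context {R : realType}.
Local Notation mu := (@lebesgue_measure R).
Local Notation phi := (@std_normal_pdf R).

Lemma std_bvn_lawX rho (A B : set R) : measurable B ->
  std_bvn_law rho (A `*` B) =
  (\int[mu]_(x in A) ((phi x)%:E *
     \int[mu]_y ((phi y)%:E * (\1_B (rho * x + Num.sqrt (1 - rho ^+ 2) * y))%:E)))%E.
Proof.
move=> mB; rewrite /std_bvn_law -[RHS]integral_mul_indic; apply: eq_integral => x _.
set s := Num.sqrt _.
have split_indic y : ((phi x * phi y)%:E * (\1_(A `*` B) (x, rho * x + s * y))%:E =
    ((phi y)%:E * (\1_B (rho * x + s * y))%:E) * (phi x * \1_A x)%:E)%E.
  rewrite !indicE in_setX -!EFinM; congr EFin.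
  by case: (x \in A); case: (_ \in B) => /=; ring.
under eq_integral => y _ do rewrite split_indic.
rewrite ge0_integralZr//=; first by rewrite EFinM muleCA muleA.
- apply: measurable_std_normal_pdf_indic => //.
  by apply: measurable_funD => //; exact: measurable_funM.
- by move=> y _; rewrite -EFinM lee_fin mulr_ge0 ?indic_ge0 ?std_normal_pdf_ge0.
- by rewrite lee_fin mulr_ge0 ?indic_ge0 ?std_normal_pdf_ge0.
Qed.

Lemma std_bvn_lawXT rho (A : set R) :
  std_bvn_law rho (A `*` setT) = (\int[mu]_(x in A) (phi x)%:E)%E.
Proof.
rewrite std_bvn_lawX//; apply: eq_integral => x _.
under eq_integral => y _ do rewrite indicT mule1.
by rewrite integral_std_normal_pdf mule1.
Qed.

Lemma std_bvn_law0X (A B : set R) : measurable A -> measurable B ->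
  std_bvn_law 0 (A `*` B) =
  (\int[mu]_(x in A) (phi x)%:E * \int[mu]_(y in B) (phi y)%:E)%E.
Proof.
move=> mA mB; rewrite std_bvn_lawX// expr0n/= subr0 sqrtr1.
under eq_integral => x _ do under eq_integral => y _ do rewrite mul0r add0r mul1r.
rewrite integral_mul_indic ge0_integralZr//.
- by apply/measurable_EFinP/measurable_funTS; exact: measurable_std_normal_pdf.
- by move=> x _; rewrite lee_fin std_normal_pdf_ge0.
- by apply: integral_ge0 => y _; rewrite lee_fin std_normal_pdf_ge0.
Qed.

Lemma std_bvn_lawTX rho b : -1 <= rho <= 1 ->
  std_bvn_law rho (setT `*` `]-oo, b]) = (\int[mu]_(y in `]-oo, b]) (phi y)%:E)%E.
Proof.
move=> /andP[rho_ge rho_le]; rewrite std_bvn_lawX//; set s := Num.sqrt _.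
have s2 : s ^+ 2 = 1 - rho ^+ 2 by rewrite sqr_sqrtr//; nra.
have [s0|s_neq0] := eqVneq s 0.
  have degenerate x : (\int[mu]_y ((phi y)%:E * (\1_`]-oo, b] (rho * x + s * y))%:E) =
      (\1_`]-oo, b] (rho * x))%:E)%E.
    under eq_integral => y _ do rewrite s0 mul0r addr0.
    rewrite ge0_integralZr ?integral_std_normal_pdf ?mul1e ?lee_fin//.
    - by apply/measurable_EFinP; exact: measurable_std_normal_pdf.
    - by move=> y _; rewrite lee_fin std_normal_pdf_ge0.
  under eq_integral => x _ do rewrite degenerate.
  have [->|->] : rho = 1 \/ rho = -1.
    by move: s2; rewrite s0 expr0n /=; nra.
  - by under eq_integral => x _ do rewrite mul1r; exact: integral_mul_indic.
  - by under eq_integral => x _ do rewrite mulN1r; exact: integral_std_normal_pdf_indicN_Iic.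
have s_gt0 : 0 < s by rewrite lt_neqAle eq_sym s_neq0 sqrtr_ge0.
under eq_integral => x _ do rewrite integral_std_normal_pdf_indic_affine_Iic//.
exact: integral_std_normal_pdf_mixture.
Qed.

End std_bvn_law.

Section event_covariance.
Context d (T : measurableType d) (R : realType) (P : probability T R).

Definition cov_event (A B : set T) : R :=
  fine (P (A `&` B)) - fine (P A) * fine (P B).

Lemma cov_eventC (A B : set T) : measurable A -> measurable B ->
  cov_event (~` A) (~` B) = cov_event A B.
Proof.
move=> mA mB; have mAB := measurableI _ _ mA mB; have mAuB := measurableU _ _ mA mB.
rewrite /cov_event -setCU !probability_setC//.
rewrite measureUfinl ?ltey_eq ?fin_num_measure//.
by rewrite !fineB ?fin_numB ?fin_numD ?fin_num_measure// fineD ?fin_num_measure//=; ring.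
Qed.

Lemma Lfun1_indic (A : set T) : measurable A -> (\1_A : T -> R) \in Lfun P 1.
Proof. by move=> mA; apply/Lfun1_integrable; exact: integrable_indic. Qed.

Lemma expectation_sum_ord n (F : 'I_n -> T -> R) : (forall i, F i \in Lfun P 1) ->
  ('E_P[\sum_(i < n) F i] = \sum_(i < n) 'E_P[F i])%E.
Proof.
move=> F1; rewrite -(big_map F predT id) expectation_sum ?big_map//.
by move=> f /mapP[i _ ->].
Qed.

Lemma expectation_sum_indic n (A : 'I_n -> set T) : (forall i, measurable (A i)) ->
  ('E_P[\sum_(i < n) \1_(A i)] = (\sum_(i < n) fine (P (A i)))%:E)%E.
Proof.
move=> mA; rewrite expectation_sum_ord => [|i]; last exact: Lfun1_indic.
rewrite -sumEFin; apply: eq_bigr => i _.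
by rewrite expectation_indic// fineK// fin_num_measure.
Qed.

Lemma covariance_sum_indic n1 n2 (A B : nat -> set T) :
    (forall i, measurable (A i)) -> (forall j, measurable (B j)) ->
  covariance P (\sum_(i < n1) \1_(A i)) (\sum_(j < n2) \1_(B j)) =
  (\sum_(i < n1) \sum_(j < n2) cov_event (A i) (B j))%:E.
Proof.
move=> mA mB.
have mAB i j : measurable (A i `&` B j) by exact: measurableI.
have prod_sum : (\sum_(i < n1) \1_(A i)) * (\sum_(j < n2) \1_(B j)) =
    \sum_(i < n1) \sum_(j < n2) (\1_(A i `&` B j) : T -> R).
  apply/funext => t; rewrite mulrfctE !fct_sumE big_distrlr /=.
  by apply: eq_bigr => i _; rewrite fct_sumE; apply: eq_bigr => j _; rewrite indicI.
rewrite covarianceE; first last.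
- by rewrite prod_sum; do 2 (apply: rpred_sum => ? _); exact: Lfun1_indic.
- by apply: rpred_sum => j _; exact: Lfun1_indic.
- by apply: rpred_sum => i _; exact: Lfun1_indic.
rewrite prod_sum expectation_sum_ord; last first.
  by move=> i; apply: rpred_sum => j _; exact: Lfun1_indic.
under eq_bigr => i _ do rewrite expectation_sum_indic//.
rewrite !expectation_sum_indic// sumEFin -EFinM -EFinB; congr EFin.
rewrite mulr_suml -sumrB; apply: eq_bigr => i _.
by rewrite mulr_sumr -sumrB.
Qed.

End event_covariance.

Section std_bvn_pair.
Context d (T : measurableType d) (R : realType) (P : probability T R).
Variables (X Y : T -> R) (rho : R).
Hypothesis XY : std_bvn_pair P X Y rho.

Lemma std_bvn_pair_cov_event a b :
  cov_event P (X @^-1` `]-oo, a]) (Y @^-1` `]-oo, b]) = Psi a b rho - Psi a b 0.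
Proof.
have [mX mY rho_bound law] := XY.
have mA := measurable_preimageT mX (measurable_itv `]-oo, a]%R).
have mB := measurable_preimageT mY (measurable_itv `]-oo, b]%R).
have PXY (C D : set R) : measurable C -> measurable D ->
    P (X @^-1` C `&` Y @^-1` D) = std_bvn_law rho (C `*` D).
  by move=> mC mD; rewrite -law//; exact: measurableX.
have PX : P (X @^-1` `]-oo, a]) = std_bvn_law rho (`]-oo, a] `*` setT).
  by rewrite -PXY// preimage_setT setIT.
have PY : P (Y @^-1` `]-oo, b]) = std_bvn_law rho (setT `*` `]-oo, b]).
  by rewrite -PXY// preimage_setT setTI.
rewrite /cov_event /Psi PXY// std_bvn_law0X// -(std_bvn_lawXT rho) -(std_bvn_lawTX b rho_bound).
by rewrite -PX -PY fineM ?fin_num_measure.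
Qed.

End std_bvn_pair.

Lemma leq_sum_bool_ord (p : nat -> bool) N : (\sum_(i < N) p i <= N)%N.
Proof. by rewrite -[leqRHS]card_ord -sum1_card leq_sum// => i _; case: (p i). Qed.

Lemma sum_down_closedE (p : nat -> bool) N :
  (forall a b, (a <= b)%N -> (b < N)%N -> p b -> p a) ->
  forall c, (c < N)%N -> p c = (c < \sum_(i < N) p i)%N.
Proof.
elim: N => [//|N IH] p_closed c cN.
rewrite big_ord_recr /=; case pN: (p N).
  have p_le_N i : (i <= N)%N -> p i by move=> iN; apply: (p_closed i N).
  rewrite (eq_bigr (fun=> 1%N)) => [|i _]; last by rewrite p_le_N// ltnW.
  by rewrite sum_nat_const card_ord muln1 p_le_N; lia.
rewrite addn0; have [cN'|cN'] := ltnP c N.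
  by apply: IH => // a b ab bN; apply: p_closed => //; lia.
have -> : c = N by lia.
by rewrite pN; apply/esym/negbTE; rewrite -leqNgt leq_sum_bool_ord.
Qed.

Lemma lin_discretizationE {T : Type} {R : realType} n (S : nat -> R) (X V : T -> R) :
  (0 < n)%N -> strictly_increasing_cutoffs n S -> lin_discretization n S X V ->
  V = \sum_(c < n.-1) \1_(X @^-1` `]S c, +oo[).
Proof.
move=> n_gt0 S_inc V_disc; apply/funext => t; rewrite fct_sumE.
pose p c := S c < X t.
have indic_p c : \1_(X @^-1` `]S c, +oo[) t = (p c)%:R :> R.
  rewrite indicE (_ : (t \in _) = p c)//.
  apply/idP/idP => [/set_mem|pc]; first by rewrite /= in_itv/= andbT.
  by apply: mem_set; rewrite /preimage/= in_itv/= andbT.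
under eq_bigr => c _ do rewrite indic_p.
rewrite -natr_sum; set m := (\sum_(c < n.-1) p c)%N.
have p_closed a b : (a <= b)%N -> (b < n.-1)%N -> p b -> p a.
  rewrite leq_eqVlt => /orP[/eqP -> //|ab] bn; apply: lt_trans.
  by apply: S_inc => //; lia.
have pE := sum_down_closedE p_closed.
have m_le : (m <= n.-1)%N := leq_sum_bool_ord p n.-1.
apply/(V_disc t m _).2; first lia.
split.
  rewrite /cut_lo; case: eqP => [_|m0]; first exact: ltNyr.
  by rewrite lte_fin; have : p m.-1 by rewrite pE; lia.
rewrite /cut_hi; case: eqP => [_|m_max]; first exact: leey.
by rewrite lee_fin leNgt; have : ~~ p m by rewrite pE; lia.
Qed.

Theorem mainTheorem3 (d : measure_display) (T : measurableType d) (R : realType)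
  (P : probability T R) (Xi Xj : T -> R) (rho : R)
  (k g : nat) (Si Sj : nat -> R) (Vi Vj : T -> R) :
  std_bvn_pair P Xi Xj rho ->
  (2 <= k)%N -> (2 <= g)%N ->
  strictly_increasing_cutoffs k Si -> strictly_increasing_cutoffs g Sj ->
  lin_discretization k Si Xi Vi -> lin_discretization g Sj Xj Vj ->
  covariance P Vi Vj =
  (\sum_(ci < k.-1) \sum_(cj < g.-1)
     (Psi (Si ci) (Sj cj) rho - Psi (Si ci) (Sj cj) 0))%:E.
Proof.
move=> XY k2 g2 Si_inc Sj_inc Vi_disc Vj_disc.
rewrite (lin_discretizationE (ltnW k2) Si_inc Vi_disc).
rewrite (lin_discretizationE (ltnW g2) Sj_inc Vj_disc).
have [mXi mXj _ _] := XY.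
rewrite (covariance_sum_indic P _ _ (A := fun c => Xi @^-1` `]Si c, +oo[)
  (B := fun c => Xj @^-1` `]Sj c, +oo[)) => [|c|c]; try exact: measurable_preimageT.
congr EFin; apply: eq_bigr => ci _; apply: eq_bigr => cj _.
rewrite -!setCitvl -!preimage_setC cov_eventC; try exact: measurable_preimageT.
exact: std_bvn_pair_cov_event.
Qed.
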